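(* Let $(L^n_{\mathbb{R}})^{+}$ be the set of all real symmetric matrices $A\in M_n(\mathbb{R})$ with nonnegative spectrum such that the Schur map $S_A\colon M_n(\mathbb{R})\to M_n(\mathbb{R})$, $S_A(B)=A\circ B$, is nonzero and multiplicative. Then $(L^n_{\mathbb{R}})^{+}$ (a group under the Schur product) has cardinality $2^{n-1}$.
   Context: $A\circ B=(a_{ij}b_{ij})$ is the entrywise product; multiplicative means $S_A(BC)=S_A(B)S_A(C)$ for all $B,C\in M_n(\mathbb{R})$. *)

From HB Require Import structures.
From mathcomp Require Import all_boot all_order all_algebra.
From mathcomp Require Import reals.
Set Implicit Arguments. Unset Strict Implicit. Unset Printing Implicit Defensive.
Import Order.TTheory GRing.Theory Num.Theory.
Local Open Scope ring_scope.

Definition schur (R : realType) (n : nat) (A B : 'M[R]_n) : 'M[R]_n :=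
  \matrix_(i, j) (A i j * B i j).

Definition schur_nonzero (R : realType) (n : nat) (A : 'M[R]_n) : Prop :=
  exists B : 'M[R]_n, schur A B != 0.

Definition schur_multiplicative (R : realType) (n : nat) (A : 'M[R]_n) : Prop :=
  forall B C : 'M[R]_n, schur A (B *m C) = schur A B *m schur A C.

(* A real symmetric matrix has nonnegative spectrum: all its (real)
   eigenvalues are >= 0 (the spectrum of a real symmetric matrix is real). *)
Definition nonneg_spectrum (R : realType) (n : nat) (A : 'M[R]_n) : Prop :=
  forall a : R, eigenvalue A a -> 0 <= a.

Definition in_Lplus (R : realType) (n : nat) (A : 'M[R]_n) : Prop :=
  [/\ A^T = A, nonneg_spectrum A, schur_nonzero A & schur_multiplicative A].

From HB Require Import structures.
From mathcomp Require Import all_boot all_order all_algebra.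
From mathcomp Require Import reals.
From mathcomp Require Import ring.
Set Implicit Arguments. Unset Strict Implicit. Unset Printing Implicit Defensive.
Import GRing.Theory Num.Theory.
Local Open Scope ring_scope.

(* Testing multiplicativity of S_A on matrix units E_ik E_kj = E_ij gives
   a_ij = a_ik a_kj for all i, k, j.  Nonvanishing of S_A then forces
   a_kk = 1, and with symmetry A = d d^T for the sign vector d = (a_i1)_i.
   Conversely every such outer product d d^T of a sign vector is symmetric,
   positive semidefinite (its eigenvalues are 0 and n) and Schur
   multiplicative.  Since d and -d give the same matrix, normalising
   d_1 = 1 leaves 2^(n-1) free signs. *)

Section OuterProduct.
Variables (R : realType) (n : nat).
Implicit Types (A : 'M[R]_n) (d : 'I_n -> R).

Definition outer_mx d : 'M[R]_n := \matrix_(i, j) (d i * d j).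

Lemma schur_delta_mx A p q : schur A (delta_mx p q) = A p q *: delta_mx p q.
Proof.
apply/matrixP => i j; rewrite !mxE.
by case: andP => [[/eqP-> /eqP->]|_]; rewrite ?mulr0 ?mulr1.
Qed.

Lemma schur_multiplicative_entry A :
  schur_multiplicative A -> forall i k j, A i j = A i k * A k j.
Proof.
move=> multA i k j; have := multA (delta_mx i k) (delta_mx k j).
rewrite mul_delta_mx !schur_delta_mx -scalemxAl -scalemxAr mul_delta_mx scalerA.
by move=> /matrixP /(_ i j); rewrite !mxE !eqxx !mulr1.
Qed.

Lemma schur_multiplicative_diag A :
  schur_nonzero A -> schur_multiplicative A -> forall k, A k k = 1.
Proof.
move=> [B nzAB] multA k; have entryA := schur_multiplicative_entry multA.
have: A k k * (A k k - 1) = 0 by rewrite mulrBr mulr1 -entryA subrr.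
move/eqP; rewrite mulf_eq0 subr_eq0 => /orP[/eqP Akk0 | /eqP //].
case/eqP: nzAB; apply/matrixP => i j.
by rewrite !mxE (entryA i k j) (entryA i k k) Akk0 mulr0 !mul0r.
Qed.

Lemma in_Lplus_outer_col A k : in_Lplus A -> A = outer_mx (fun i => A i k).
Proof.
case=> symA _ _ multA; apply/matrixP => i j.
have symAkj : A k j = A j k by rewrite -{1}symA mxE.
by rewrite mxE (schur_multiplicative_entry multA i k j) symAkj.
Qed.

Lemma in_Lplus_col_sqr A i k : in_Lplus A -> A i k ^+ 2 = 1.
Proof.
move=> LA; case: (LA) => _ _ nzA multA.
have := congr1 (fun M : 'M_n => M i i) (in_Lplus_outer_col k LA).
by rewrite /= mxE (schur_multiplicative_diag nzA multA) expr2.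
Qed.

Lemma outer_mx_sym d : (outer_mx d)^T = outer_mx d.
Proof. by apply/matrixP => i j; rewrite !mxE mulrC. Qed.

Lemma eigenvalue_outer_mx d a :
  eigenvalue (outer_mx d) a -> a = 0 \/ a = \sum_i d i ^+ 2.
Proof.
case/eigenvalueP => v eigv nz_v.
pose s := \sum_i v 0 i * d i.
have eig_entry j : s * d j = a * v 0 j.
  have := congr1 (fun M : 'rV_n => M 0 j) eigv; rewrite /= !mxE => <-.
  by rewrite mulr_suml; apply: eq_bigr => i _; rewrite mxE mulrA.
have eig_s : s * \sum_i d i ^+ 2 = a * s.
  rewrite mulr_sumr mulr_sumr; apply: eq_bigr => j _.
  by rewrite expr2 mulrA -eig_entry mulrA.
have [s0 | nz_s] := eqVneq s 0; last first.
  by right; apply: (mulIf nz_s); rewrite -eig_s mulrC.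
left; apply/eqP; apply: contraNT nz_v => nz_a; apply/eqP/matrixP => i j.
rewrite (ord1 i) mxE; apply: (mulfI nz_a).
by rewrite -eig_entry s0 !mul0r mulr0.
Qed.

Lemma nonneg_spectrum_outer_mx d : nonneg_spectrum (outer_mx d).
Proof.
move=> a /eigenvalue_outer_mx [-> // | ->].
by apply: sumr_ge0 => i _; exact: sqr_ge0.
Qed.

Lemma schur_multiplicative_outer_mx d :
  (forall i, d i ^+ 2 = 1) -> schur_multiplicative (outer_mx d).
Proof.
move=> dsqr B C; apply/matrixP => i j; rewrite !mxE mulr_sumr.
apply: eq_bigr => k _; rewrite !mxE.
by rewrite -[LHS]mulr1 -(dsqr k); ring.
Qed.

Lemma schur_nonzero_outer_mx d i : d i != 0 -> schur_nonzero (outer_mx d).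
Proof.
move=> nz_di; exists 1; apply/eqP => /matrixP /(_ i i).
by rewrite !mxE eqxx mulr1; apply/eqP; rewrite mulf_neq0.
Qed.

Lemma in_Lplus_outer_mx d :
  (0 < n)%N -> (forall i, d i ^+ 2 = 1) -> in_Lplus (outer_mx d).
Proof.
move=> n_gt0 dsqr; split; rewrite ?outer_mx_sym //.
- exact: nonneg_spectrum_outer_mx.
- apply: (@schur_nonzero_outer_mx _ (Ordinal n_gt0)).
  by rewrite -sqrf_eq0 dsqr oner_eq0.
- exact: schur_multiplicative_outer_mx.
Qed.

End OuterProduct.

Lemma sqr_eq1_sign (R : idomainType) (x : R) : x ^+ 2 = 1 -> x = (-1) ^+ (x == -1).
Proof.
move/eqP; rewrite sqrf_eq1; have [-> // | _] := eqVneq x (-1).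
by rewrite orbF => /eqP.
Qed.

Section SignVectors.
Variables (R : realType) (m : nat).
Implicit Type f : {ffun 'I_m -> bool}.

Definition sign_vec f (i : 'I_m.+1) : R :=
  if unlift ord0 i is Some k then (-1) ^+ f k else 1.

Lemma sign_vec_sqr f i : sign_vec f i ^+ 2 = 1.
Proof. by rewrite /sign_vec; case: unlift => [k|]; rewrite ?sqrr_sign ?expr1n. Qed.

Lemma outer_sign_vec_inj : injective (fun f => outer_mx (sign_vec f)).
Proof.
move=> f g /matrixP eq_fg; apply/ffunP => k; apply: (@signr_inj R).
by have := eq_fg ord0 (lift ord0 k); rewrite !mxE /sign_vec unlift_none liftK !mul1r.
Qed.

Lemma in_Lplus_outer_sign_vec (A : 'M[R]_m.+1) :
  in_Lplus A -> exists f, A = outer_mx (sign_vec f).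
Proof.
move=> LA; case: (LA) => _ _ nzA multA.
exists [ffun k => A (lift ord0 k) ord0 == -1].
rewrite [LHS](in_Lplus_outer_col ord0 LA).
suff col_sign i : A i ord0 = sign_vec [ffun k => A (lift ord0 k) ord0 == -1] i.
  by apply/matrixP => i j; rewrite !mxE !col_sign.
rewrite /sign_vec; case: unliftP => [k -> | ->].
  by rewrite ffunE -sqr_eq1_sign // (in_Lplus_col_sqr _ _ LA).
exact: schur_multiplicative_diag.
Qed.

End SignVectors.

Theorem theorem3p4 (R : realType) (n : nat) (hn : (0 < n)%N) :
  exists s : seq 'M[R]_n,
    [/\ uniq s, (forall A : 'M[R]_n, A \in s <-> in_Lplus A)
      & size s = (2 ^ n.-1)%N].
Proof.
case: n hn => // m _.
exists [seq outer_mx (sign_vec R f) | f <- enum {ffun 'I_m -> bool}]; split.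
- by rewrite map_inj_uniq ?enum_uniq //; exact: outer_sign_vec_inj.
- move=> A; split.
  + by case/mapP => f _ ->; apply: in_Lplus_outer_mx => //; exact: sign_vec_sqr.
  + by case/in_Lplus_outer_sign_vec => f ->; apply/mapP; exists f; rewrite ?mem_enum.
- by rewrite size_map -cardE card_ffun card_bool card_ord.
Qed.
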